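(* For every $A\in\mathbb{C}^{m\times n}$ and every $\alpha_0,\beta_0\in(0,\tfrac{\pi}{2})$, $$\max_{z\in S^m_{\alpha_0}}\min_{w\in S^n_{\beta_0}}\mathrm{Re}(z^*Aw)=\min_{w\in S^n_{\beta_0}}\max_{z\in S^m_{\alpha_0}}\mathrm{Re}(z^*Aw),$$ i.e. $\underline v=\overline v$. Consequently every two-player zero-sum complex game $G_{\mathcal C}(A)$ has a complex Nash equilibrium in mixed complex strategies.
   Context: For $\gamma\in(0,\tfrac{\pi}{2})$ and $p\ge 1$ let $S^p_\gamma=\{z\in\mathbb{C}^p:\ \text{for each }k,\ z_k=0\text{ or }|\arg z_k|\le\gamma,\ \sum_{k=1}^p z_k=1\}$ ($\arg$ the principal argument in $(-\pi,\pi]$). The two-player zero-sum complex game $G_{\mathcal C}(A)$, for $A=(a_{ij})\in\mathbb{C}^{m\times n}$ and strategy arguments $\alpha_0,\beta_0\in(0,\tfrac{\pi}{2})$: player I chooses $z\in S^m_{\alpha_0}$, player II chooses $w\in S^n_{\beta_0}$, player I receives $\mathrm{Re}(z^*Aw)$ and player II receives $-\mathrm{Re}(z^*Aw)$, where $z^*$ is the conjugate transpose. A pair $(z^0,w^0)\in S^m_{\alpha_0}\times S^n_{\beta_0}$ is a complex Nash equilibrium if $\mathrm{Re}(z^*Aw^0)\le\mathrm{Re}((z^0)^*Aw^0)\le\mathrm{Re}((z^0)^*Aw)$ for all $z\in S^m_{\alpha_0}$, $w\in S^n_{\beta_0}$. *)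

From HB Require Import structures.
From mathcomp Require Import all_boot all_order all_algebra.
From mathcomp Require Import all_classical all_reals.
From mathcomp Require Import trigo.
From mathcomp Require Import complex.
Set Implicit Arguments. Unset Strict Implicit. Unset Printing Implicit Defensive.
Import Order.TTheory GRing.Theory Num.Theory.
Local Open Scope ring_scope.

Definition is_principal_arg (R : realType) (z : R[i]) (theta : R) : Prop :=
  - pi < theta <= pi /\
  exists r : R, 0 < r /\ complex.Re z = r * cos theta /\ complex.Im z = r * sin theta.

Definition strat_set (R : realType) (p : nat) (gamma : R) (z : 'cV[R[i]]_p) : Prop :=
  (forall k : 'I_p, z k 0 = 0 \/
     exists theta : R, is_principal_arg (z k 0) theta /\ `|theta| <= gamma) /\
  \sum_(k < p) z k 0 = 1.

Definition payoff (R : realType) (m n : nat) (A : 'M[R[i]]_(m, n))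
  (z : 'cV[R[i]]_m) (w : 'cV[R[i]]_n) : R :=
  complex.Re (((map_mx conjc z)^T *m A *m w) 0 0).

Definition is_min_on (T : Type) (R : realType) (P : T -> Prop) (g : T -> R) (v : R) : Prop :=
  (exists2 x, P x & g x = v) /\ (forall x, P x -> v <= g x).

Definition is_max_on (T : Type) (R : realType) (P : T -> Prop) (g : T -> R) (v : R) : Prop :=
  (exists2 x, P x & g x = v) /\ (forall x, P x -> g x <= v).

(* v = max_{z in Sz} min_{w in Sw} f z w  (all extrema attained) *)
Definition is_maxmin (T U : Type) (R : realType) (Sz : T -> Prop) (Sw : U -> Prop)
  (f : T -> U -> R) (v : R) : Prop :=
  (forall z, Sz z -> exists mz, is_min_on Sw (f z) mz) /\
  (exists2 z0, Sz z0 & is_min_on Sw (f z0) v) /\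
  (forall z mz, Sz z -> is_min_on Sw (f z) mz -> mz <= v).

(* v = min_{w in Sw} max_{z in Sz} f z w  (all extrema attained) *)
Definition is_minmax (T U : Type) (R : realType) (Sz : T -> Prop) (Sw : U -> Prop)
  (f : T -> U -> R) (v : R) : Prop :=
  (forall w, Sw w -> exists Mw, is_max_on Sz (fun z => f z w) Mw) /\
  (exists2 w0, Sw w0 & is_max_on Sz (fun z => f z w0) v) /\
  (forall w Mw, Sw w -> is_max_on Sz (fun z => f z w) Mw -> v <= Mw).

Definition complex_nash (R : realType) (m n : nat) (A : 'M[R[i]]_(m, n))
  (alpha0 beta0 : R) (z0 : 'cV[R[i]]_m) (w0 : 'cV[R[i]]_n) : Prop :=
  strat_set alpha0 z0 /\ strat_set beta0 w0 /\
  (forall z, strat_set alpha0 z -> payoff A z w0 <= payoff A z0 w0) /\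
  (forall w, strat_set beta0 w -> payoff A z0 w0 <= payoff A z0 w).

From HB Require Import structures.
From mathcomp Require Import all_boot all_order all_algebra.
From mathcomp Require Import all_classical all_reals.
From mathcomp Require Import trigo complex.
From mathcomp Require Import topology normedtype derive.
From mathcomp Require Import ring lra.
Import Order.TTheory GRing.Theory Num.Theory.
Import numFieldNormedType.Exports.
Local Open Scope ring_scope.
Set Implicit Arguments. Unset Strict Implicit. Unset Printing Implicit Defensive.

(* The sector {z | z = 0 or |arg z| <= g} is the convex cone spanned by e^(i g)
   and e^(-i g), so S^m_g is the convex hull of the finitely many points
   (e^(i g) e_i + e^(-i g) e_j) / (2 cos g), and the payoff is bilinear for real
   convex combinations.  The complex game is thus the mixed extension of a finite
   real matrix game between these vertices, and a saddle point of the latter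
   (von Neumann's minimax theorem) is a complex Nash equilibrium.  The minimax
   theorem is proved by induction on the number of active rows and columns:
   take maximisers x0, y0 of the two security levels (extreme value theorem);
   if every active column is tight at x0 and every active row is tight at y0,
   the two security levels are opposite, and otherwise dropping a slack column
   (or row) does not change the value. *)

Section ContinuousBig.
Context {R : realType} {T : topologicalType} {I : Type}.
Variables (P : pred I) (F : I -> T -> R^o).
Hypothesis F_cont : forall i, continuous (F i).

Lemma continuous_sum (s : seq I) : continuous (fun x => \sum_(i <- s | P i) F i x).
Proof.
elim: s => [|i s IH].
  by under [X in continuous X]eq_fun do rewrite big_nil; exact: cst_continuous.
under [X in continuous X]eq_fun do rewrite big_cons.
case: (P i) => // x.
apply: (@continuousD R R^o T (F i) (fun y => \sum_(j <- s | P j) F j y) x).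
  exact: F_cont.
exact: IH.
Qed.

Lemma continuous_bigmin (f0 : T -> R^o) (s : seq I) : continuous f0 ->
  continuous (fun x => \big[Order.min/f0 x]_(i <- s | P i) F i x).
Proof.
move=> f0_cont; elim: s => [|i s IH].
  by under [X in continuous X]eq_fun do rewrite big_nil.
under [X in continuous X]eq_fun do rewrite big_cons.
case: (P i) => // x.
apply: (@continuous_min R T (F i) (fun y => \big[Order.min/f0 y]_(j <- s | P j) F j y) x).
  exact: F_cont.
exact: IH.
Qed.

End ContinuousBig.

Section MatrixGame.
Variable R : realType.
Implicit Types p q : nat.

Definition simplex p (I : {set 'I_p}) (x : 'rV[R]_p) : Prop :=
  [/\ forall i, 0 <= x 0 i, forall i, i \notin I -> x 0 i = 0 & \sum_i x 0 i = 1].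

Lemma simplexS p (I I' : {set 'I_p}) x : I \subset I' -> simplex I x -> simplex I' x.
Proof.
move=> sII [x_ge0 x_out x_sum]; split=> // i iI'; apply: x_out.
by apply: contra iI' => /(fintype.subsetP sII).
Qed.

Lemma simplex_convex p (I : {set 'I_p}) x y (t : R) :
  simplex I x -> simplex I y -> 0 <= t <= 1 -> simplex I ((1 - t) *: x + t *: y).
Proof.
move=> [x_ge0 x_out x_sum] [y_ge0 y_out y_sum] /andP[t_ge0 t_le1]; split.
- by move=> i; rewrite !mxE addr_ge0 // mulr_ge0 // subr_ge0.
- by move=> i iI; rewrite !mxE x_out // y_out // !mulr0 addr0.
- under eq_bigr do rewrite !mxE.
  by rewrite big_split /= -!mulr_sumr x_sum y_sum !mulr1 subrK.
Qed.

Lemma simplex_delta p (I : {set 'I_p}) i : i \in I -> simplex I (delta_mx 0 i).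
Proof.
move=> iI; split=> [k | k kI | ]; rewrite ?mxE ?ler0n //.
  by rewrite eqxx; case: eqP => // ki; rewrite ki iI in kI.
by rewrite (bigD1 i) //= mxE !eqxx big1 ?addr0 // => k /negbTE ki; rewrite mxE ki andbF.
Qed.

Lemma simplex_sum_const p (I : {set 'I_p}) x (c : 'I_p -> R) a :
  simplex I x -> {in I, forall i, c i = a} -> \sum_i x 0 i * c i = a.
Proof.
move=> [_ x_out x_sum] c_const; rewrite -[RHS]mul1r -x_sum mulr_suml.
apply: eq_bigr => i _; case: (boolP (i \in I)) => iI; first by rewrite c_const.
by rewrite x_out // !mul0r.
Qed.

Lemma simplex_sum_le p (I : {set 'I_p}) x (c : 'I_p -> R) a :
  simplex I x -> (forall i, c i <= a) -> \sum_i x 0 i * c i <= a.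
Proof.
move=> [x_ge0 _ x_sum] c_le; rewrite -[leRHS]mul1r -x_sum mulr_suml.
by apply: ler_sum => i _; apply: ler_wpM2l.
Qed.

Lemma simplex_sum_ge p (I : {set 'I_p}) x (c : 'I_p -> R) a :
  simplex I x -> (forall i, a <= c i) -> a <= \sum_i x 0 i * c i.
Proof.
move=> [x_ge0 _ x_sum] c_ge; rewrite -[leLHS]mul1r -x_sum mulr_suml.
by apply: ler_sum => i _; apply: ler_wpM2l.
Qed.

Lemma closed_simplex p (I : {set 'I_p}) : closed (simplex I).
Proof.
have -> : simplex I =
    ((\bigcap_i [set x | 0 <= x 0 i]) `&` (\bigcap_(i in [set i | i \notin I])
      [set x | x 0 i = 0]) `&` [set x | \sum_i x 0 i = 1])%classic.
  apply/seteqP; split=> [x [x_ge0 x_out x_sum] | x [[x_ge0 x_out] x_sum]].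
    by split; first (split=> i iI; [apply: x_ge0 | apply: x_out]).
  by split=> [i | i iI |]; [apply: x_ge0 | apply: x_out |].
have coord_cont i : continuous (fun x : 'rV[R]_p => x 0 i) by exact: coord_continuous.
apply: closedI; [apply: closedI|].
- apply: closed_bigI => i _.
  apply: (@preimage_closed _ _ (fun x : 'rV[R]_p => x 0 i) [set y : R | 0 <= y]).
    by move=> x _; exact: coord_cont.
  exact: closed_ge.
- apply: closed_bigI => i _.
  apply: (@preimage_closed _ _ (fun x : 'rV[R]_p => x 0 i) [set y : R | y = 0]).
    by move=> x _; exact: coord_cont.
  exact: closed_eq.
- apply: (@preimage_closed _ _ (fun x : 'rV[R]_p => \sum_i x 0 i) [set y : R | y = 1]).
    by move=> x _; apply: continuous_sum.
  exact: closed_eq.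
Qed.

Lemma compact_simplex p (I : {set 'I_p}) : compact (simplex I).
Proof.
apply: bounded_closed_compact; last exact: closed_simplex.
exists 1; split; first by rewrite num_real.
move=> r r_gt1 x [x_ge0 _ x_sum].
rewrite /= [leLHS]/Num.norm /= mx_normrE; apply: bigmax_le => [|[a i] _ /=].
  by rewrite ltW // (lt_trans ltr01).
rewrite (ord1 a) ger0_norm // (le_trans _ (ltW r_gt1)) // -x_sum (bigD1 i) //=.
by rewrite lerDl sumr_ge0.
Qed.

Lemma continuous_mulmx_coord p q (M : 'M[R]_(p, q)) j :
  continuous (fun x : 'rV[R]_p => (x *m M) 0 j).
Proof.
under [X in continuous X]eq_fun do rewrite mxE.
apply: continuous_sum => i x.
apply: (@continuousM R _ (fun y : 'rV[R]_p => y 0 i) (fun=> M i j) x).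
  exact: coord_continuous.
exact: cst_continuous.
Qed.

Section LowerValue.
Variables (p q : nat) (M : 'M[R]_(p, q)) (J : {set 'I_q}) (j0 : 'I_q).
Hypothesis j0J : j0 \in J.

(* [j0] only seeds the minimum: it is irrelevant as soon as [j0 \in J]. *)
Definition lower (x : 'rV[R]_p) : R :=
  \big[Order.min/(x *m M) 0 j0]_(j in J) (x *m M) 0 j.

Lemma lower_le x j : j \in J -> lower x <= (x *m M) 0 j.
Proof. exact: bigmin_le_cond. Qed.

Lemma lower_ge x a : (forall j, j \in J -> a <= (x *m M) 0 j) -> a <= lower x.
Proof. by move=> a_le; apply/bigmin_geP; split=> //; apply: a_le. Qed.

Lemma lower_gt x a : (forall j, j \in J -> a < (x *m M) 0 j) -> a < lower x.
Proof. by move=> a_lt; apply/bigmin_gtP; split=> //; apply: a_lt. Qed.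

Lemma continuous_lower : continuous lower.
Proof. by apply: continuous_bigmin => j; apply: continuous_mulmx_coord. Qed.

Lemma lower_argmax (I : {set 'I_p}) i0 : i0 \in I ->
  exists2 x0, simplex I x0 & forall x, simplex I x -> lower x <= lower x0.
Proof.
move=> i0I.
have [||x0] := @EVT_max_rV R p lower (simplex I) _ (@compact_simplex p I).
- by exists (delta_mx 0 i0); apply: simplex_delta.
- by apply: continuous_subspaceT; exact: continuous_lower.
by rewrite inE => x0I x0_max; exists x0 => // x xI; apply: x0_max; rewrite inE.
Qed.

End LowerValue.

Definition saddle p q (M : 'M[R]_(p, q)) (I : {set 'I_p}) (J : {set 'I_q}) : Prop :=
  exists (x : 'rV_p) (y : 'rV_q) (v : R), [/\ simplex I x, simplex J y,
    forall j, j \in J -> v <= (x *m M) 0 j & forall i, i \in I -> (y *m M^T) 0 i <= v].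

Lemma mulmx_convex_coord p q (M : 'M[R]_(p, q)) (x y : 'rV_p) (t : R) j :
  (((1 - t) *: x + t *: y) *m M) 0 j = (1 - t) * (x *m M) 0 j + t * (y *m M) 0 j.
Proof. by rewrite mulmxDl -!scalemxAl !mxE. Qed.

Lemma sum_mulmx_trmx p q (M : 'M[R]_(p, q)) (x : 'rV_p) (y : 'rV_q) :
  \sum_j y 0 j * (x *m M) 0 j = \sum_i x 0 i * (y *m M^T) 0 i.
Proof.
under eq_bigr do rewrite mxE mulr_sumr.
rewrite exchange_big /=; apply: eq_bigr => i _.
by rewrite mxE mulr_sumr; apply: eq_bigr => j _; rewrite !mxE; ring.
Qed.

Section SlackColumn.
Variables (p q : nat) (M : 'M[R]_(p, q)) (I : {set 'I_p}) (J : {set 'I_q}).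
Variables (j0 j : 'I_q) (x0 : 'rV[R]_p).
Hypotheses (j0J : j0 \in J) (j_slack : lower M J j0 x0 < (x0 *m M) 0 j).

Lemma slack_column_proper : exists k, k \in J :\ j.
Proof.
case: (pickP (mem (J :\ j))) => [k kJ | none]; first by exists k.
move: j_slack; rewrite ltNge => /negP[]; apply: lower_ge => // k kJ.
by have /eqP -> : k == j by apply: contraFT (none k) => kj; rewrite !inE kj.
Qed.

(* The step [t = d / (d + |c - c0|)], with [d] the slack of column [j], keeps
   column [j] above [lower x0]. *)
Lemma lower_improve x :
  (forall k, k \in J :\ j -> lower M J j0 x0 < (x *m M) 0 k) ->
  exists2 t : R, 0 < t <= 1 & lower M J j0 x0 < lower M J j0 ((1 - t) *: x0 + t *: x).
Proof.
move: j_slack; set g0 := lower M J j0 x0; set c0 := (x0 *m M) 0 j.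
set c := (x *m M) 0 j => slack x_gt.
have d_gt0 : 0 < c0 - g0 by rewrite subr_gt0.
have de_gt0 : 0 < c0 - g0 + `|c - c0| by rewrite ltr_wpDr.
pose t := (c0 - g0) / (c0 - g0 + `|c - c0|).
have t_gt0 : 0 < t by rewrite divr_gt0.
have t_le1 : t <= 1 by rewrite ler_pdivrMr // mul1r lerDl.
have te_lt : t * `|c - c0| < c0 - g0.
  by rewrite mulrAC ltr_pdivrMr // ltr_pM2l // ltrDr.
exists t; first by rewrite t_gt0 t_le1.
apply: lower_gt => // k kJ; rewrite mulmx_convex_coord.
have [-> | kj] := eqVneq k j.
  have : - `|c - c0| <= c - c0 by rewrite lerNnormlW.
  rewrite -/c0 -/c; nra.
have x0_ge : g0 <= (x0 *m M) 0 k := lower_le M j0 x0 kJ.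
have x_gt_k : g0 < (x *m M) 0 k by apply: x_gt; rewrite !inE kj.
nra.
Qed.

Lemma lower_dual_ge0_of_slack i0 y0 :
  i0 \in I -> simplex I x0 ->
  (forall x, simplex I x -> lower M J j0 x <= lower M J j0 x0) ->
  (forall y, simplex J y -> lower (- M^T) I i0 y <= lower (- M^T) I i0 y0) ->
  saddle M I (J :\ j) -> 0 <= lower M J j0 x0 + lower (- M^T) I i0 y0.
Proof.
move=> i0I x0I x0_max y0_max [x [y [v [xI yJ v_le y_le]]]].
have v_le_lower : v <= lower M J j0 x0.
  rewrite leNgt; apply/negP => lt_v.
  have [t /andP[t_gt0 t_le1]] := lower_improve (fun k kJ => lt_le_trans lt_v (v_le k kJ)).
  rewrite ltNge => /negP; apply; apply: x0_max.
  by apply: simplex_convex => //; rewrite ltW.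
have : - v <= lower (- M^T) I i0 y.
  by apply: lower_ge => // i iI; rewrite mulmxN mxE lerN2 y_le.
have := y0_max y (simplexS (subD1set J j) yJ); lra.
Qed.

End SlackColumn.

Lemma sum_lower_tight p q (M : 'M[R]_(p, q)) (J : {set 'I_q}) j0 (x : 'rV_p) (y : 'rV_q) :
  j0 \in J -> simplex J y ->
  ~~ [exists j in J, lower M J j0 x < (x *m M) 0 j] ->
  \sum_j y 0 j * (x *m M) 0 j = lower M J j0 x.
Proof.
move=> j0J yJ /existsPn tight; apply: simplex_sum_const yJ _ => j jJ.
by apply/eqP; rewrite eq_le lower_le // andbT leNgt; have := tight j; rewrite jJ.
Qed.

Lemma saddle_of_lower p q (M : 'M[R]_(p, q)) I J i0 j0 (x0 : 'rV_p) (y0 : 'rV_q) :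
  simplex I x0 -> simplex J y0 -> 0 <= lower M J j0 x0 + lower (- M^T) I i0 y0 ->
  saddle M I J.
Proof.
move=> x0I y0J ge0; exists x0, y0, (lower M J j0 x0); split=> // [j jJ | i iI].
  exact: lower_le.
by have := lower_le (- M^T) i0 y0 iI; rewrite mulmxN mxE; lra.
Qed.

Theorem matrix_game_saddle p q (M : 'M[R]_(p, q)) (I : {set 'I_p}) (J : {set 'I_q})
  i0 j0 :
  i0 \in I -> j0 \in J -> saddle M I J.
Proof.
move: {2}(#|I| + #|J|)%N (leqnn (#|I| + #|J|)) => N.
elim: N p q M I J i0 j0 => [|N IH] p q M I J i0 j0 size_IJ i0I j0J.
  move: size_IJ; rewrite leqn0 addn_eq0 cards_eq0 => /andP[/eqP I0 _].
  by rewrite I0 inE in i0I.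
have [x0 x0I x0_max] := lower_argmax M J j0 i0I.
have [y0 y0J y0_max] := lower_argmax (- M^T) I i0 j0J.
apply: (saddle_of_lower x0I y0J).
have [/existsP[j /andP[jJ j_slack]] | J_tight] :=
  boolP [exists j in J, lower M J j0 x0 < (x0 *m M) 0 j].
  apply: (lower_dual_ge0_of_slack j0J j_slack i0I x0I x0_max y0_max).
  have [j1 j1J] := slack_column_proper j0J j_slack.
  apply: IH i0I j1J.
  by rewrite -ltnS (leq_trans _ size_IJ) // (cardsD1 j J) jJ add1n addnS.
have [/existsP[i /andP[iI i_slack]] | I_tight] :=
  boolP [exists i in I, lower (- M^T) I i0 y0 < (y0 *m - M^T) 0 i].
  have dualK : - (- M^T)^T = M by rewrite linearN /= trmxK opprK.
  have := lower_dual_ge0_of_slack i0I i_slack j0J y0J; rewrite dualK addrC.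
  apply=> //; have [i1 i1I] := slack_column_proper i0I i_slack.
  apply: IH j0J i1I.
  by rewrite -ltnS (leq_trans _ size_IJ) // (cardsD1 i I) iI add1n addSn addnC.
rewrite -(sum_lower_tight j0J y0J J_tight) -(sum_lower_tight i0I x0I I_tight).
rewrite sum_mulmx_trmx -big_split /= big1 // => i _.
by rewrite mulmxN -mulrDr !mxE subrr mulr0.
Qed.

End MatrixGame.

Section ComplexFacts.
Variable R : realType.
Local Open Scope complex_scope.
Local Notation Re := (@complex.Re R).
Local Notation Im := (@complex.Im R).
Implicit Types x y : R[i].

Lemma complex_ext x y : Re x = Re y -> Im x = Im y -> x = y.
Proof. by case: x y => [? ?] [? ?] /= -> ->. Qed.

Lemma Re_sum (I : finType) (F : I -> R[i]) : Re (\sum_i F i) = \sum_i Re (F i).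
Proof. exact: raddf_sum. Qed.

Lemma Im_sum (I : finType) (F : I -> R[i]) : Im (\sum_i F i) = \sum_i Im (F i).
Proof. exact: raddf_sum. Qed.

Lemma Re_realM (r : R) x : Re (r%:C * x) = r * Re x.
Proof. by case: x => a b /=; rewrite mul0r subr0. Qed.

Lemma Im_realM (r : R) x : Im (r%:C * x) = r * Im x.
Proof. by case: x => a b /=; rewrite mul0r addr0. Qed.

Lemma conjc_realM (r : R) x : (r%:C * x)^* = r%:C * x^*.
Proof. by case: x => a b; rewrite /conjc /=; congr (_ +i* _); ring. Qed.

Lemma payoff_suml m n (A : 'M[R[i]]_(m, n)) (I : finType) (l : I -> R) F w :
  payoff A (\sum_i (l i)%:C *: F i) w = \sum_i l i * payoff A (F i) w.
Proof.
rewrite /payoff map_mx_sum raddf_sum /= !mulmx_suml summxE Re_sum.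
apply: eq_bigr => i _.
have -> : map_mx conjc ((l i)%:C *: F i) = (l i)%:C *: map_mx conjc (F i).
  by apply/matrixP => j k; rewrite !mxE conjc_realM.
by rewrite linearZ /= -!scalemxAl mxE Re_realM.
Qed.

Lemma payoff_sumr m n (A : 'M[R[i]]_(m, n)) (I : finType) (l : I -> R) z F :
  payoff A z (\sum_i (l i)%:C *: F i) = \sum_i l i * payoff A z (F i).
Proof.
rewrite /payoff mulmx_sumr summxE Re_sum; apply: eq_bigr => i _.
by rewrite -scalemxAr mxE Re_realM.
Qed.

End ComplexFacts.

Section Sums.
Variables (R : realType) (m : nat).
Implicit Types a b : 'I_m -> R.

Lemma sum_mul_delta (f : 'I_m -> R) r : \sum_i f i * (r == i)%:R = f r.
Proof.
rewrite (bigD1 r) //= eqxx mulr1 big1 ?addr0 // => i ir.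
by rewrite eq_sym (negbTE ir) mulr0.
Qed.

Lemma sum_delta (r : 'I_m) : \sum_i ((i == r)%:R : R) = 1.
Proof. by under eq_bigr do rewrite eq_sym -[_%:R]mul1r; rewrite sum_mul_delta. Qed.

Lemma sum_enum_pair (F : 'I_m * 'I_m -> R) :
  \sum_(k < #|{: 'I_m * 'I_m}|) F (enum_val k) = \sum_i \sum_j F (i, j).
Proof. by rewrite -big_enum_val /= pair_big /=; apply: eq_bigr => -[]. Qed.

Lemma sum_product_delta a b (r : 'I_m) (c d : R) : \sum_i a i = 1 -> \sum_j b j = 1 ->
  \sum_i \sum_j a i * b j * ((r == i)%:R * c + (r == j)%:R * d) = a r * c + b r * d.
Proof.
move=> a_sum b_sum; transitivity ((\sum_i a i * c * (r == i)%:R) * \sum_j b j +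
    (\sum_i a i) * \sum_j b j * d * (r == j)%:R).
  rewrite !mulr_suml -big_split; apply: eq_bigr => i _.
  by rewrite !mulr_sumr -big_split; apply: eq_bigr => j _ /=; ring.
by rewrite a_sum b_sum mulr1 mul1r !sum_mul_delta.
Qed.

End Sums.

Definition in_sector (R : realType) (g : R) (x : R[i]) : Prop :=
  `|complex.Im x| * cos g <= complex.Re x * sin g.

Section Sector.
Variables (R : realType) (g : R).
Hypothesis g_range : 0 < g < pi / 2.
Local Open Scope complex_scope.
Local Notation Re := (@complex.Re R).
Local Notation Im := (@complex.Im R).
Implicit Types x : R[i].

Let pi_gt0 := @pi_gt0 R.

Let cos_gt0 : 0 < cos g.
Proof. by apply: cos_gt0_pihalf; case/andP: g_range => *; apply/andP; split; lra. Qed.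

Let sin_gt0 : 0 < sin g.
Proof. exact: sin_gt0_pihalf. Qed.

Let tan_gt0 : 0 < tan g.
Proof. exact: divr_gt0. Qed.

Lemma sector_of_arg x th : is_principal_arg x th -> `|th| <= g -> in_sector g x.
Proof.
rewrite /in_sector => -[_ [r [r_gt0 [-> ->]]]]; rewrite ler_norml => /andP[th_ge th_le].
case/andP: g_range => g_gt0 g_lt.
have : 0 <= sin (g + th) by apply: sin_ge0_pi; apply/andP; split; lra.
have : 0 <= sin (g - th) by apply: sin_ge0_pi; apply/andP; split; lra.
rewrite sinB sinD normrM (gtr0_norm r_gt0) => h1 h2.
by have [s_ge0 | s_lt0] := lerP 0 (sin th); [rewrite ger0_norm | rewrite ltr0_norm]; nra.
Qed.

Lemma abs_atan_le (t : R) : `|t| <= tan g -> `|atan t| <= g.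
Proof.
case/andP: g_range => g_gt0 g_lt.
have g_in : g \in `](- (pi / 2)), (pi / 2)[ by rewrite in_itv /=; apply/andP; split; lra.
rewrite !ler_norml => /andP[t_ge t_le]; rewrite -(tanK g_in) -atanN.
by apply/andP; split; apply: le_atan.
Qed.

Lemma principal_arg_atan x : 0 < Re x -> is_principal_arg x (atan (Im x / Re x)).
Proof.
set t := Im x / Re x => Re_gt0.
have [t_gt t_lt] := (atan_gtNpi2 t, atan_ltpi2 t).
have cos_t_gt0 : 0 < cos (atan t) by apply: cos_gt0_pihalf; rewrite t_gt t_lt.
split; first by apply/andP; split; lra.
exists (Re x / cos (atan t)); split; first exact: divr_gt0.
split; first by rewrite divfK // gt_eqF.
by rewrite -mulrA -[_^-1 * _]mulrC -/(tan _) atanK /t mulrC divfK // gt_eqF.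
Qed.

Lemma arg_of_sector x : 0 < Re x -> in_sector g x ->
  exists th, is_principal_arg x th /\ `|th| <= g.
Proof.
move=> Re_gt0 x_sec; exists (atan (Im x / Re x)).
split; first exact: principal_arg_atan.
apply: abs_atan_le; rewrite normrM normfV (gtr0_norm Re_gt0) ler_pdivrMr //.
by rewrite /tan mulrAC ler_pdivlMr // (mulrC (sin g)).
Qed.

Lemma sector_entryP x :
  (x = 0 \/ exists th, is_principal_arg x th /\ `|th| <= g) <-> in_sector g x.
Proof.
split=> [[-> | [th [th_arg th_le]]] | x_sec].
- by rewrite /in_sector normr0 !mul0r.
- exact: sector_of_arg th_arg th_le.
have : 0 <= Re x * sin g by apply: le_trans x_sec; rewrite mulr_ge0 // ltW.
rewrite pmulr_lge0 // le_eqVlt => /orP[/eqP Re0 | Re_gt0]; last first.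
  by right; apply: arg_of_sector.
left; apply: complex_ext => //=; apply/eqP; rewrite -normr_le0.
by rewrite -(pmulr_lle0 _ cos_gt0) (le_trans x_sec) // -Re0 mul0r.
Qed.

Lemma strat_setP m (z : 'cV[R[i]]_m) :
  strat_set g z <-> (forall k, in_sector g (z k 0)) /\ \sum_k z k 0 = 1.
Proof.
by split=> -[z_sec z_sum]; split=> // k; apply/sector_entryP; exact: z_sec.
Qed.

Lemma in_sector_sum (I : finType) (l : I -> R) (F : I -> R[i]) :
  (forall i, 0 <= l i) -> (forall i, in_sector g (F i)) ->
  in_sector g (\sum_i (l i)%:C * F i).
Proof.
move=> l_ge0 F_sec; rewrite /in_sector Re_sum Im_sum.
under eq_bigr do rewrite Im_realM; under [X in _ <= X * _]eq_bigr do rewrite Re_realM.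
have := ler_wpM2r (ltW cos_gt0)
  (ler_norm_sum (index_enum I) (fun i => l i * Im (F i)) xpredT).
move/le_trans; apply.
rewrite !mulr_suml; apply: ler_sum => i _.
rewrite normrM (ger0_norm (l_ge0 i)) -!mulrA ler_wpM2l //; exact: F_sec.
Qed.

(* The extreme points of [strat_set g]: [(e^(i g) e_i + e^(-i g) e_j) / (2 cos g)]. *)
Definition vertex m (ij : 'I_m * 'I_m) : 'cV[R[i]]_m :=
  \col_k ((((k == ij.1)%:R + (k == ij.2)%:R) / 2 : R) +i*
          (((k == ij.1)%:R - (k == ij.2)%:R) * (tan g / 2))).

Lemma vertex_in_sector m (ij : 'I_m * 'I_m) k : in_sector g (vertex ij k 0).
Proof.
rewrite /in_sector mxE /= normrM (gtr0_norm (divr_gt0 tan_gt0 _)) ?ltr0n // -mulrA.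
have -> : tan g / 2 * cos g = sin g / 2 by rewrite /tan mulrAC divfK ?gt_eqF.
have : `|(k == ij.1)%:R - (k == ij.2)%:R| <= (k == ij.1)%:R + (k == ij.2)%:R :> R.
  by rewrite ler_norml; have := ler0n R (k == ij.1); have := ler0n R (k == ij.2); lra.
have := sin_gt0; nra.
Qed.

Lemma sum_vertex m (ij : 'I_m * 'I_m) : \sum_k vertex ij k 0 = 1.
Proof.
apply: complex_ext; rewrite ?Re_sum ?Im_sum; under eq_bigr do rewrite mxE /=.
  by rewrite -mulr_suml big_split /= !sum_delta; lra.
by rewrite -mulr_suml sumrB !sum_delta subrr mul0r.
Qed.

Lemma strat_set_vertex m (ij : 'I_m * 'I_m) : strat_set g (vertex ij).
Proof. by apply/strat_setP; split=> [k|]; [exact: vertex_in_sector | exact: sum_vertex]. Qed.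

Definition vertex_mix m (l : 'rV[R]_#|{: 'I_m * 'I_m}|) : 'cV[R[i]]_m :=
  \sum_k (l 0 k)%:C *: vertex (enum_val k).

Lemma vertex_mix_entry m (l : 'rV[R]_#|{: 'I_m * 'I_m}|) r :
  vertex_mix l r 0 = \sum_k (l 0 k)%:C * vertex (enum_val k) r 0.
Proof. by rewrite summxE; apply: eq_bigr => k _; rewrite mxE. Qed.

Lemma strat_set_mix m (l : 'rV[R]_#|{: 'I_m * 'I_m}|) :
  simplex [set: _] l -> strat_set g (vertex_mix l).
Proof.
move=> [l_ge0 _ l_sum]; apply/strat_setP; split=> [r|].
  by rewrite vertex_mix_entry; apply: in_sector_sum => // k; exact: vertex_in_sector.
under eq_bigr do rewrite vertex_mix_entry.
rewrite exchange_big /=; under eq_bigr do rewrite -mulr_sumr sum_vertex mulr1.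
by rewrite -raddf_sum l_sum.
Qed.

Lemma sector_weights_ge0 x :
  in_sector g x -> 0 <= Re x + Im x / tan g /\ 0 <= Re x - Im x / tan g.
Proof.
move=> x_sec; have : `|Im x / tan g| <= Re x.
  by rewrite normrM normfV (gtr0_norm tan_gt0) ler_pdivrMr // /tan mulrA ler_pdivlMr.
by rewrite ler_norml => /andP[? ?]; split; lra.
Qed.

(* [z_k = (a_k e^(i g) + b_k e^(-i g)) / (2 cos g)] with [a], [b] probability
   vectors, and [z] is the mixture of the vertices with weights [a_i b_j]. *)
Lemma vertex_decomposition m (z : 'cV[R[i]]_m) :
  strat_set g z -> exists2 l, simplex [set: _] l & z = vertex_mix l.
Proof.
case/strat_setP => z_sec z_sum.
pose a k := Re (z k 0) + Im (z k 0) / tan g.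
pose b k := Re (z k 0) - Im (z k 0) / tan g.
have Im_sum0 : \sum_k Im (z k 0) = 0 by rewrite -Im_sum z_sum.
have a_sum : \sum_k a k = 1.
  by rewrite big_split /= -Re_sum z_sum -mulr_suml Im_sum0 mul0r addr0.
have b_sum : \sum_k b k = 1.
  by rewrite sumrB /= -Re_sum z_sum -mulr_suml Im_sum0 mul0r subr0.
exists (\row_k (a (enum_val k).1 * b (enum_val k).2)).
  split=> [k | k | ]; rewrite ?inE //.
    by rewrite mxE mulr_ge0 //; [exact: (sector_weights_ge0 (z_sec _)).1 |
                                 exact: (sector_weights_ge0 (z_sec _)).2].
  under eq_bigr do rewrite mxE; rewrite (sum_enum_pair (fun ij => a ij.1 * b ij.2)) /=.
  by under eq_bigr do rewrite -mulr_sumr b_sum mulr1.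
apply/matrixP => r c; rewrite (ord1 c) vertex_mix_entry; apply: complex_ext.
  rewrite Re_sum; under eq_bigr do rewrite Re_realM !mxE /=.
  rewrite (sum_enum_pair (fun ij => a ij.1 * b ij.2 *
    (((r == ij.1)%:R + (r == ij.2)%:R) / 2))) /=.
  under eq_bigr do under eq_bigr do rewrite (mulrDl _ _ 2^-1).
  by rewrite sum_product_delta // /a /b; lra.
rewrite Im_sum; under eq_bigr do rewrite Im_realM !mxE /=.
rewrite (sum_enum_pair (fun ij => a ij.1 * b ij.2 *
  (((r == ij.1)%:R - (r == ij.2)%:R) * (tan g / 2)))) /=.
under eq_bigr do under eq_bigr do rewrite (mulrBl (tan g / 2)) -mulrN.
by rewrite sum_product_delta // /a /b; field; rewrite gt_eqF.
Qed.

End Sector.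

Section SaddleValue.
Variables (T U : Type) (R : realType) (Sz : T -> Prop) (Sw : U -> Prop) (f : T -> U -> R).
Variables (z0 : T) (w0 : U).
Hypotheses (z0S : Sz z0) (w0S : Sw w0).
Hypotheses (z_le : forall z, Sz z -> f z w0 <= f z0 w0).
Hypotheses (w_ge : forall w, Sw w -> f z0 w0 <= f z0 w).

Lemma saddle_is_maxmin :
  (forall z, Sz z -> exists mz, is_min_on Sw (f z) mz) -> is_maxmin Sz Sw f (f z0 w0).
Proof.
move=> has_min; split=> //; split; first by exists z0 => //; split=> //; exists w0.
by move=> z mz zS [_ mz_le]; apply: le_trans (mz_le _ w0S) (z_le zS).
Qed.

Lemma saddle_is_minmax :
  (forall w, Sw w -> exists Mw, is_max_on Sz (fun z => f z w) Mw) ->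
  is_minmax Sz Sw f (f z0 w0).
Proof.
move=> has_max; split=> //; split; first by exists w0 => //; split=> //; exists z0.
by move=> w Mw wS [_ Mw_ge]; apply: le_trans (w_ge wS) (Mw_ge _ z0S).
Qed.

End SaddleValue.

Section VertexGame.
Variables (R : realType) (m n : nat) (A : 'M[R[i]]_(m, n)) (alpha beta : R).
Hypotheses (alpha_range : 0 < alpha < pi / 2) (beta_range : 0 < beta < pi / 2).
Hypotheses (m_gt0 : (0 < m)%N) (n_gt0 : (0 < n)%N).

Definition vertex_payoff : 'M[R]_(#|{: 'I_m * 'I_m}|, #|{: 'I_n * 'I_n}|) :=
  \matrix_(k, l) payoff A (vertex alpha (enum_val k)) (vertex beta (enum_val l)).

Lemma vertex_payoff_row x l :
  (x *m vertex_payoff) 0 l = payoff A (vertex_mix alpha x) (vertex beta (enum_val l)).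
Proof. by rewrite mxE payoff_suml; apply: eq_bigr => k _; rewrite mxE. Qed.

Lemma vertex_payoff_col y k :
  (y *m vertex_payoff^T) 0 k = payoff A (vertex alpha (enum_val k)) (vertex_mix beta y).
Proof. by rewrite mxE payoff_sumr; apply: eq_bigr => l _; rewrite !mxE. Qed.

Lemma payoff_ge_vertices z w a : strat_set beta w ->
  (forall l, a <= payoff A z (vertex beta l)) -> a <= payoff A z w.
Proof.
case/(vertex_decomposition beta_range) => y yS -> a_le.
by rewrite payoff_sumr; apply: simplex_sum_ge yS _ => l.
Qed.

Lemma payoff_le_vertices z w a : strat_set alpha z ->
  (forall k, payoff A (vertex alpha k) w <= a) -> payoff A z w <= a.
Proof.
case/(vertex_decomposition alpha_range) => x xS -> le_a.
by rewrite payoff_suml; apply: simplex_sum_le xS _ => k.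
Qed.

Lemma complex_nash_exists : exists z0 w0, complex_nash A alpha beta z0 w0.
Proof.
have [x [y [v [xS yS v_le le_v]]]] := matrix_game_saddle vertex_payoff
  (finset.in_setT (enum_rank (Ordinal m_gt0, Ordinal m_gt0)))
  (finset.in_setT (enum_rank (Ordinal n_gt0, Ordinal n_gt0))).
pose z0 := vertex_mix alpha x; pose w0 := vertex_mix beta y.
have z0_ge z : strat_set beta z -> v <= payoff A z0 z.
  move=> zS; apply: payoff_ge_vertices zS _ => l.
  by rewrite -(enum_rankK l) -vertex_payoff_row v_le ?finset.in_setT.
have w0_le z : strat_set alpha z -> payoff A z w0 <= v.
  move=> zS; apply: payoff_le_vertices zS _ => k.
  by rewrite -(enum_rankK k) -vertex_payoff_col le_v ?finset.in_setT.
have z0S : strat_set alpha z0 by exact: strat_set_mix.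
have w0S : strat_set beta w0 by exact: strat_set_mix.
have v_eq : payoff A z0 w0 = v by apply/le_anti; rewrite w0_le ?z0_ge.
by exists z0, w0; split=> //; split=> //; rewrite v_eq; split.
Qed.

Lemma payoff_min_attained z : exists mz, is_min_on (strat_set beta) (payoff A z) mz.
Proof.
have [l _ l_min] := @arg_minP _ _ _ (Ordinal n_gt0, Ordinal n_gt0) predT
  (fun l => payoff A z (vertex beta l)) isT.
exists (payoff A z (vertex beta l)); split.
  by exists (vertex beta l); first exact: strat_set_vertex.
by move=> w wS; apply: payoff_ge_vertices wS _ => l'; exact: l_min.
Qed.

Lemma payoff_max_attained w :
  exists Mw, is_max_on (strat_set alpha) (fun z => payoff A z w) Mw.
Proof.
have [k _ k_max] := @arg_maxP _ _ _ (Ordinal m_gt0, Ordinal m_gt0) predT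
  (fun k => payoff A (vertex alpha k) w) isT.
exists (payoff A (vertex alpha k) w); split.
  by exists (vertex alpha k); first exact: strat_set_vertex.
by move=> z zS; apply: payoff_le_vertices zS _ => k'; exact: k_max.
Qed.

End VertexGame.

Unset Implicit Arguments.

Theorem theorem5p2 (R : realType) (m n : nat) (A : 'M[R[i]]_(m, n))
  (alpha0 beta0 : R) :
  (0 < m)%N -> (0 < n)%N ->
  0 < alpha0 < pi / 2 -> 0 < beta0 < pi / 2 ->
  (exists v : R,
     is_maxmin (strat_set alpha0) (strat_set beta0) (payoff A) v /\
     is_minmax (strat_set alpha0) (strat_set beta0) (payoff A) v) /\
  (exists z0 w0, complex_nash A alpha0 beta0 z0 w0).
Proof.
move=> m_gt0 n_gt0 alpha_range beta_range.
have [z0 [w0 nash]] := complex_nash_exists A alpha_range beta_range m_gt0 n_gt0.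
split; last by exists z0, w0.
have [z0S [w0S [z_le w_ge]]] := nash.
exists (payoff A z0 w0); split.
  by apply: saddle_is_maxmin => // z _; exact: payoff_min_attained.
by apply: saddle_is_minmax => // w _; exact: payoff_max_attained.
Qed.
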